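(* Let $(G,P,\Delta)$ be a Garside structure of finite type on a group $G$, and let $S$ be its set of simple elements. Then $$\langle S\setminus\{e\}\mid s\cdot t=st \text{ for all } s,t\in S\setminus\{e\} \text{ such that } st\in S\rangle$$ is a restricted triangular presentation of $G$.
   Context: A Garside structure $(G,P,\Delta)$ on a group $G$ consists of a submonoid $P$ with $P\cap P^{-1}=\{e\}$ and an element $\Delta\in P$ such that: (i) the partial order $a\le_L b\iff a^{-1}b\in P$ is a lattice order on $G$; (ii) the set of simple elements $[e,\Delta]=\{a\in G\mid e\le_L a\le_L\Delta\}$ generates $P$; (iii) $\Delta^{-1}P\Delta=P$; (iv) for every $x\in P\setminus\{e\}$, $\sup\{k\mid x=a_1\cdots a_k,\ a_i\in P\setminus\{e\}\}<\infty$. It is of finite type if $[e,\Delta]$ is finite. A presentation $\langle T\mid R\rangle$ of $G$ ($T\subset G$ a finite generating set) is a restricted triangular presentation if: $T\cap T^{-1}=\emptyset$; $R=\{a\cdot b\cdot c^{-1}\mid a,b,c\in T,\ abc^{-1}=e\text{ in }G\}$ and $\langle T\mid R\rangle$ presents $G$; there are no $a,b,c\in T$ with $abc=e$ in $G$; and for $a,b,c\in T$, $abc\in T$ implies $ab\in T$ and $bc\in T$. *)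

From Stdlib Require Import List.
Import ListNotations.
Set Implicit Arguments.

Record group := Group {
  gcar :> Type;
  gmul : gcar -> gcar -> gcar;
  gone : gcar;
  ginv : gcar -> gcar;
  gmulA : forall x y z, gmul x (gmul y z) = gmul (gmul x y) z;
  gmul1l : forall x, gmul gone x = x;
  gmulVl : forall x, gmul (ginv x) x = gone
}.

Section Defs.
Context {G : group}.
Local Notation "x * y" := (gmul G x y).
Local Notation e := (gone G).

Definition gprod (l : list G) : G := fold_right (gmul G) e l.

Definition finite_set (A : G -> Prop) : Prop :=
  exists l : list G, forall x, A x <-> In x l.

Definition leL (P : G -> Prop) (a b : G) : Prop := P (ginv G a * b).

Definition is_lub (le : G -> G -> Prop) (a b c : G) : Prop :=
  le a c /\ le b c /\ forall d, le a d -> le b d -> le c d.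
Definition is_glb (le : G -> G -> Prop) (a b c : G) : Prop :=
  le c a /\ le c b /\ forall d, le d a -> le d b -> le d c.

Definition lattice_order (le : G -> G -> Prop) : Prop :=
  (forall a, le a a) /\
  (forall a b c, le a b -> le b c -> le a c) /\
  (forall a b, le a b -> le b a -> a = b) /\
  (forall a b, exists c, is_lub le a b c) /\
  (forall a b, exists c, is_glb le a b c).

Definition simples (P : G -> Prop) (Delta : G) (a : G) : Prop :=
  leL P e a /\ leL P a Delta.

Definition gen_submonoid (A : G -> Prop) (x : G) : Prop :=
  exists l : list G, Forall A l /\ x = gprod l.

Definition garside (P : G -> Prop) (Delta : G) : Prop :=
  P e /\ (forall a b, P a -> P b -> P (a * b)) /\
  (forall a, P a -> P (ginv G a) -> a = e) /\
  P Delta /\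
  lattice_order (leL P) /\
  (forall x, P x <-> gen_submonoid (simples P Delta) x) /\
  (forall x, P x <-> (exists y, P y /\ x = ginv G Delta * y * Delta)) /\
  (forall x, P x -> x <> e ->
     exists N : nat, forall l : list G,
       Forall (fun a => P a /\ a <> e) l -> gprod l = x -> length l <= N).

Definition garside_finite_type (P : G -> Prop) (Delta : G) : Prop :=
  garside P Delta /\ finite_set (simples P Delta).

(** words: letters (true, a) = a, (false, a) = a^{-1} *)
Definition word := list (bool * gcar G).

Definition eval_letter (x : bool * G) : G :=
  if fst x then snd x else ginv G (snd x).

Definition eval (w : word) : G := gprod (map eval_letter w).

Definition word_over (T : G -> Prop) (w : word) : Prop :=
  Forall (fun x => T (snd x)) w.

(** congruence on words generated by free cancellation and relators:
    the equivalence whose classes are the elements of <T | R> *)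
Inductive wequiv (T : G -> Prop) (R : word -> Prop) : word -> word -> Prop :=
| weq_refl w : wequiv T R w w
| weq_sym w w' : wequiv T R w w' -> wequiv T R w' w
| weq_trans w1 w2 w3 : wequiv T R w1 w2 -> wequiv T R w2 w3 -> wequiv T R w1 w3
| weq_free u v b a : T a ->
    wequiv T R (u ++ v) (u ++ (b, a) :: (negb b, a) :: v)
| weq_rel u v r : R r -> wequiv T R (u ++ v) (u ++ r ++ v).

(** <T | R> presents G (T a subset of G): the relators are words over T
    that hold in G, and the natural map from <T | R> to G is a bijection. *)
Definition presents (T : G -> Prop) (R : word -> Prop) : Prop :=
  (forall r, R r -> word_over T r /\ eval r = e) /\
  (forall g, exists w, word_over T w /\ eval w = g) /\
  (forall w w', word_over T w -> word_over T w' -> eval w = eval w' ->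
     wequiv T R w w').

Definition triangular_relators (T : G -> Prop) (w : word) : Prop :=
  exists a b c, T a /\ T b /\ T c /\ a * b * ginv G c = e /\
    w = [(true, a); (true, b); (false, c)].

Definition restricted_triangular_presentation (T : G -> Prop) (R : word -> Prop)
  : Prop :=
  finite_set T /\
  (forall a, T a -> T (ginv G a) -> False) /\
  (forall w, R w <-> triangular_relators T w) /\
  presents T R /\
  (forall a b c, T a -> T b -> T c -> a * b * c <> e) /\
  (forall a b c, T a -> T b -> T c -> T (a * b * c) -> T (a * b) /\ T (b * c)).

End Defs.
Arguments word : clear implicits.

(** The elementary conditions (finiteness of T, no
    inverse pairs, no trivial triples, closure of T under sub-products of a
    generator) follow from P ∩ P^{-1} = {e} and from the fact that prefixes
    and suffixes of simple elements are simple.  The substance is that the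
    relators present G, which is shown in three steps:
    - positive words over T with the same value are equivalent: the greedy
      head gcd(x, Δ) can be extracted from any positive word of value x,
      and one inducts on the bound on decomposition lengths of axiom (iv);
    - every word is equivalent to Δ^{-k}·u with u positive, since
      a·Δ^{-1} ≡ Δ^{-1}·(ΔaΔ^{-1}) and a^{-1} ≡ (a^{-1}Δ)·Δ^{-1};
    - two words w, w' with the same value: w·w'^{-1} ≡ Δ^{-k}·u where u and
      Δ^k are positive words with the same value, hence w·w'^{-1} ≡ 1. *)

From Stdlib Require Import List Lia Classical PeanoNat.
Import ListNotations.

Section GroupFacts.
Context {G : group}.
Local Notation "x * y" := (gmul G x y).
Local Notation e := (gone G).
Local Notation inv := (ginv G).

Lemma mulVr x : x * inv x = e.
Proof.
  transitivity (inv (inv x) * inv x * (x * inv x)).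
  - rewrite gmulVl, gmul1l. reflexivity.
  - rewrite <- gmulA, (gmulA G (inv x) x (inv x)), gmulVl, gmul1l. apply gmulVl.
Qed.

Lemma mulr1 x : x * e = x.
Proof. rewrite <- (gmulVl G x), gmulA, mulVr, gmul1l. reflexivity. Qed.

Lemma mulKl x y : inv x * (x * y) = y.
Proof. rewrite gmulA, gmulVl, gmul1l. reflexivity. Qed.

Lemma mulKr x y : x * (inv x * y) = y.
Proof. rewrite gmulA, mulVr, gmul1l. reflexivity. Qed.

Lemma mulcanl x y z : x * y = x * z -> y = z.
Proof. intro H. rewrite <- (mulKl x y), H, mulKl. reflexivity. Qed.

Lemma inv_uniq x y : x * y = e -> y = inv x.
Proof. intro H. apply (mulcanl x). rewrite H, mulVr. reflexivity. Qed.

Lemma invK x : inv (inv x) = x.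
Proof. symmetry. apply inv_uniq, gmulVl. Qed.

Lemma invM x y : inv (x * y) = inv y * inv x.
Proof.
  symmetry. apply inv_uniq.
  rewrite <- gmulA, (gmulA G y), mulVr, gmul1l, mulVr. reflexivity.
Qed.

Lemma inv1 : inv e = e.
Proof. symmetry. apply inv_uniq, gmul1l. Qed.

End GroupFacts.

Section Words.
Context {G : group}.
Local Notation "x * y" := (gmul G x y).
Local Notation e := (gone G).
Local Notation inv := (ginv G).

Definition flip (x : bool * G) : bool * G := (negb (fst x), snd x).
Definition winv (w : word G) : word G := rev (map flip w).

Definition pword (l : list G) : word G := map (fun a => (true, a)) l.

Lemma winv_invol (w : word G) : winv (winv w) = w.
Proof.
  unfold winv. rewrite map_rev, rev_involutive, map_map.
  rewrite <- (map_id w) at 2. apply map_ext. intros [b a]; unfold flip; simpl.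
  rewrite Bool.negb_involutive. reflexivity.
Qed.

Lemma eval_app (u v : word G) : eval (u ++ v) = eval u * eval v.
Proof.
  induction u as [|x u IH]; unfold eval in *; simpl.
  - rewrite gmul1l. reflexivity.
  - rewrite IH, gmulA. reflexivity.
Qed.

Lemma eval_winv (w : word G) : eval (winv w) = inv (eval w).
Proof.
  induction w as [|[[|] a] w IH].
  - symmetry. apply inv1.
  - change (winv ((true, a) :: w)) with (winv w ++ [(false, a)]).
    rewrite eval_app, IH. unfold eval, eval_letter; simpl. rewrite invM, !mulr1. reflexivity.
  - change (winv ((false, a) :: w)) with (winv w ++ [(true, a)]).
    rewrite eval_app, IH. unfold eval, eval_letter; simpl. rewrite invM, invK, !mulr1. reflexivity.
Qed.

Lemma eval_pword (l : list G) : eval (pword l) = gprod l.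
Proof.
  induction l as [|a l IH]; [reflexivity|].
  unfold eval in *; simpl. rewrite IH. reflexivity.
Qed.

Section OverT.
Context {T : G -> Prop}.

Lemma word_over_app (u v : word G) :
  word_over T u -> word_over T v -> word_over T (u ++ v).
Proof. intros; apply Forall_app; split; assumption. Qed.

Lemma word_over_winv (w : word G) : word_over T w -> word_over T (winv w).
Proof.
  intro H. apply Forall_rev, Forall_map.
  eapply Forall_impl; [|exact H]. intros [b a]; simpl; auto.
Qed.

Lemma word_over_pword (l : list G) : Forall T l -> word_over T (pword l).
Proof. induction 1; constructor; simpl; auto. Qed.

Context {R : word G -> Prop}.
Local Notation W := (wequiv T R).

Lemma weq_app_l u w1 w2 : W w1 w2 -> W (u ++ w1) (u ++ w2).
Proof.
  induction 1.
  - apply weq_refl.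
  - apply weq_sym; assumption.
  - eapply weq_trans; eassumption.
  - rewrite !app_assoc. apply weq_free; assumption.
  - rewrite !app_assoc, <- (app_assoc (u ++ u0) r v). apply weq_rel; assumption.
Qed.

Lemma weq_app_r v w1 w2 : W w1 w2 -> W (w1 ++ v) (w2 ++ v).
Proof.
  induction 1.
  - apply weq_refl.
  - apply weq_sym; assumption.
  - eapply weq_trans; eassumption.
  - rewrite <- !app_assoc. apply weq_free; assumption.
  - rewrite <- !app_assoc. apply weq_rel; assumption.
Qed.

Lemma weq_app a b c d : W a b -> W c d -> W (a ++ c) (b ++ d).
Proof. intros H1 H2. eapply weq_trans; [apply weq_app_r, H1 | apply weq_app_l, H2]. Qed.

Lemma weq_cons x c d : W c d -> W (x :: c) (x :: d).
Proof. apply (weq_app_l [x]). Qed.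

Lemma weq_pair (x : bool * G) : T (snd x) -> W [x; flip x] [].
Proof. destruct x as [b a]. intro H. apply weq_sym, (weq_free T R [] [] b a H). Qed.

Lemma weq_relator r : R r -> W r [].
Proof. intro H. apply weq_sym. rewrite <- (app_nil_r r). apply (weq_rel T R [] [] r H). Qed.

Lemma weq_cancel w : word_over T w -> W (w ++ winv w) [].
Proof.
  induction w as [|x w IH]; intro H; [apply weq_refl|].
  inversion H; subst. change (winv (x :: w)) with (winv w ++ [flip x]). simpl.
  eapply weq_trans.
  - apply weq_cons. rewrite app_assoc. apply (weq_app_r [flip x]), IH. assumption.
  - apply weq_pair. assumption.
Qed.

Lemma weq_cancel_l w : word_over T w -> W (winv w ++ w) [].
Proof.
  intro H. rewrite <- (winv_invol w) at 2. apply weq_cancel, word_over_winv, H.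
Qed.

Lemma weq_solve x y : word_over T y -> W (x ++ y) [] -> W x (winv y).
Proof.
  intros Hy H. apply weq_trans with (x ++ y ++ winv y).
  - apply weq_sym. rewrite <- (app_nil_r x) at 2. apply weq_app_l, weq_cancel, Hy.
  - rewrite app_assoc. apply (weq_app_r _ _ [] H).
Qed.

Lemma weq_rot x y : word_over T y -> W (x ++ y) [] -> W (y ++ x) [].
Proof.
  intros Hy H. apply weq_trans with (y ++ winv y).
  - apply weq_app_l, weq_solve; assumption.
  - apply weq_cancel, Hy.
Qed.

Lemma weq_triangle x y z : T x -> T y -> T z ->
  W [(true, x); (true, y); (false, z)] [] ->
  W [(true, x); (true, y)] [(true, z)] /\
  W [(false, z); (true, x)] [(false, y)] /\
  W [(true, y); (false, z)] [(false, x)].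
Proof.
  intros Tx Ty Tz H.
  assert (Ox : word_over T [(true, x)]) by (repeat constructor; assumption).
  assert (Oy : word_over T [(true, y)]) by (repeat constructor; assumption).
  assert (Oz : word_over T [(false, z)]) by (repeat constructor; assumption).
  assert (Oyz : word_over T [(true, y); (false, z)]) by (repeat constructor; assumption).
  split; [|split].
  - exact (weq_solve [(true, x); (true, y)] [(false, z)] Oz H).
  - apply (weq_solve [(false, z); (true, x)] [(true, y)] Oy).
    exact (weq_rot [(true, x); (true, y)] [(false, z)] Oz H).
  - apply (weq_solve [(true, y); (false, z)] [(true, x)] Ox).
    exact (weq_rot [(true, x)] [(true, y); (false, z)] Oyz H).
Qed.

Lemma eval_weq w1 w2 : (forall r, R r -> eval r = e) -> W w1 w2 -> eval w1 = eval w2.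
Proof.
  intros HR H. induction H as [| | | u v b a _ | u v r Hr].
  - reflexivity.
  - symmetry; assumption.
  - etransitivity; eassumption.
  - rewrite !eval_app. f_equal. unfold eval; simpl. rewrite gmulA.
    replace (eval_letter (b, a) * eval_letter (negb b, a)) with e.
    + rewrite gmul1l. reflexivity.
    + destruct b; symmetry; [apply mulVr | apply gmulVl].
  - rewrite !eval_app, (HR r Hr), gmul1l. reflexivity.
Qed.

End OverT.
End Words.

Section Garside.
Context {G : group} (P : G -> Prop) (D : G).
Hypothesis HG : garside P D.
Local Notation "x * y" := (gmul G x y).
Local Notation e := (gone G).
Local Notation inv := (ginv G).
Local Notation le := (leL P).
Local Notation S := (simples P D).

Definition Tset (x : G) : Prop := S x /\ x <> e.
Local Notation T := Tset.

Lemma P_one : P e.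
Proof. destruct HG as (H & _); exact H. Qed.

Lemma P_mul a b : P a -> P b -> P (a * b).
Proof. destruct HG as (_ & H & _); apply H. Qed.

Lemma P_antisym a : P a -> P (inv a) -> a = e.
Proof. destruct HG as (_ & _ & H & _); apply H. Qed.

Lemma P_Delta : P D.
Proof. destruct HG as (_ & _ & _ & H & _); exact H. Qed.

Lemma le_lattice : lattice_order le.
Proof. destruct HG as (_ & _ & _ & _ & H & _); exact H. Qed.

Lemma P_generated x : P x -> gen_submonoid S x.
Proof. destruct HG as (_ & _ & _ & _ & _ & H & _); apply H. Qed.

Lemma P_conj_Delta x : P x -> P (inv D * x * D).
Proof. destruct HG as (_ & _ & _ & _ & _ & _ & H & _). intro Hx. apply H. eauto. Qed.

Lemma P_finite_length x : P x -> x <> e -> exists N : nat, forall l : list G,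
  Forall (fun a => P a /\ a <> e) l -> gprod l = x -> length l <= N.
Proof. destruct HG as (_ & _ & _ & _ & _ & _ & _ & H); apply H. Qed.

Lemma P_conj_Delta_inv x : P x -> P (D * x * inv D).
Proof.
  destruct HG as (_ & _ & _ & _ & _ & _ & H & _).
  intro Hx. apply H in Hx as [y [Hy ->]].
  rewrite <- !gmulA, mulKr, gmulA, <- gmulA, mulVr, mulr1. exact Hy.
Qed.

Lemma le_refl a : le a a.
Proof. apply le_lattice. Qed.

Lemma le_antisym a b : le a b -> le b a -> a = b.
Proof. apply le_lattice. Qed.

Lemma glb_exists a b : exists c, is_glb le a b c.
Proof. apply le_lattice. Qed.

Lemma le_mul_r a b : P b -> le a (a * b).
Proof. intro H. unfold leL. rewrite mulKl. exact H. Qed.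

Lemma le_cancel_l c x y : le (c * x) (c * y) -> le x y.
Proof. unfold leL. rewrite invM, <- gmulA, mulKl. auto. Qed.

Lemma simple_iff x : S x <-> P x /\ P (inv x * D).
Proof. unfold simples, leL. rewrite inv1, gmul1l. tauto. Qed.

Lemma S_P x : S x -> P x.
Proof. intros H%simple_iff. apply H. Qed.

Lemma S_Delta : S D.
Proof. apply simple_iff. rewrite gmulVl. split; [apply P_Delta | apply P_one]. Qed.

(** Since P ∩ P^{-1} = {e}, a non-trivial positive product is non-trivial. *)
Lemma P_mul_ne_e a b : P a -> P b -> a <> e -> a * b <> e.
Proof.
  intros Ha Hb Hne E. apply Hne, P_antisym; [exact Ha|].
  rewrite <- (inv_uniq a b E). exact Hb.
Qed.

Lemma simple_split x y : P x -> P y -> S (x * y) -> S x /\ S y.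
Proof.
  intros Hx Hy Hs. apply simple_iff in Hs as [Hxy Hw].
  set (w := inv (x * y) * D) in *.
  assert (Ew : x * (y * w) = D) by (unfold w; rewrite gmulA, mulKr; reflexivity).
  split; apply simple_iff; split; auto.
  - replace (inv x * D) with (y * w) by (rewrite <- Ew, mulKl; reflexivity).
    apply P_mul; assumption.
  - assert (Ex : inv D * x = inv (y * w))
      by (rewrite <- Ew, invM, <- gmulA, gmulVl, mulr1; reflexivity).
    replace (inv y * D) with (w * (inv D * x * D)).
    + apply P_mul; [|apply P_conj_Delta]; assumption.
    + rewrite Ex, invM, <- gmulA, mulKr. reflexivity.
Qed.

Lemma T_P a : T a -> P a.
Proof. intros [H _]. apply S_P, H. Qed.

Lemma T_mul a b : T a -> T b -> S (a * b) -> T (a * b).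
Proof.
  intros Ha Hb Hs. split; [exact Hs|].
  apply P_mul_ne_e; [apply T_P; assumption | apply T_P; assumption | apply Ha].
Qed.

Lemma T_Delta a : T a -> T D.
Proof.
  intros [Sa Ha]. split; [apply S_Delta|]. intro E. apply Ha.
  apply simple_iff in Sa as [Pa Pc]. rewrite E, mulr1 in Pc. apply P_antisym; assumption.
Qed.

Lemma gprod_P l : Forall T l -> P (gprod l).
Proof. induction 1; simpl; [apply P_one | apply P_mul; [apply T_P|]; assumption]. Qed.

Lemma gprod_e l : Forall T l -> gprod l = e -> l = [].
Proof.
  intros H E. destruct H as [|a l Ha Hl]; [reflexivity|]. exfalso.
  apply (P_mul_ne_e a (gprod l)); [apply T_P | apply gprod_P | apply Ha |];
    assumption.
Qed.

Lemma right_complement_T a : T a -> a <> D -> T (inv a * D).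
Proof.
  intros [Sa _] Ea. pose proof Sa as [Pa Pc]%simple_iff.
  split.
  - apply (simple_split a); [assumption | assumption | rewrite mulKr; apply S_Delta].
  - intro E. apply Ea. rewrite <- (mulKr a D), E, mulr1. reflexivity.
Qed.

Lemma left_complement_T a : T a -> a <> D -> T (D * inv a).
Proof.
  intros [Sa _] Ea. pose proof Sa as [Pa Pc]%simple_iff.
  split; [apply simple_iff; split|].
  - replace (D * inv a) with (D * (inv a * D) * inv D)
      by (rewrite <- !gmulA, mulVr, mulr1; reflexivity).
    apply P_conj_Delta_inv, Pc.
  - rewrite invM, invK, <- gmulA, gmulVl, mulr1. exact Pa.
  - intro E. apply Ea. rewrite <- (invK a), (inv_uniq _ _ E). apply invK.
Qed.

Definition phi (a : G) : G := D * a * inv D.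

Lemma T_phi a : T a -> T (phi a).
Proof.
  intros [Sa Ha]. pose proof Sa as [Pa Pc]%simple_iff.
  split; [apply simple_iff; split|].
  - apply P_conj_Delta_inv, Pa.
  - replace (inv (phi a) * D) with (D * (inv a * D) * inv D).
    + apply P_conj_Delta_inv, Pc.
    + unfold phi. rewrite !invM, invK, <- !gmulA, gmulVl, mulVr, !mulr1. reflexivity.
  - intro E. apply Ha.
    assert (Ea : a = inv D * phi a * D)
      by (unfold phi; rewrite <- !gmulA, gmulVl, mulr1, mulKl; reflexivity).
    rewrite Ea, E, mulr1. apply gmulVl.
Qed.

Lemma T_phi_iter k a : T a -> T (Nat.iter k phi a).
Proof. intro H. induction k; simpl; [exact H | apply T_phi, IHk]. Qed.

Definition simple_relators (w : word G) : Prop :=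
  exists s t : G, T s /\ T t /\ S (s * t) /\ w = [(true, s); (true, t); (false, s * t)].
Local Notation W := (wequiv T simple_relators).

Lemma relators_hold r : simple_relators r -> word_over T r /\ eval r = e.
Proof.
  intros [s [t [Ts [Tt [Sst ->]]]]]. split.
  - repeat apply Forall_cons; try apply Forall_nil; simpl; try apply T_mul; assumption.
  - unfold eval, eval_letter; simpl. rewrite mulr1, gmulA, mulVr. reflexivity.
Qed.

Lemma eval_W w1 w2 : W w1 w2 -> eval w1 = eval w2.
Proof. apply eval_weq. intros r Hr. apply relators_hold, Hr. Qed.

Lemma simple_relation a b c : T a -> T b -> a * b = c -> S c ->
  W [(true, a); (true, b)] [(true, c)] /\
  W [(false, c); (true, a)] [(false, b)] /\
  W [(true, b); (false, c)] [(false, a)].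
Proof.
  intros Ta Tb <- Sc. apply weq_triangle; [assumption | assumption | apply T_mul; assumption |].
  apply weq_relator. exists a, b. auto.
Qed.

(** If the simple s = a·r satisfies r <= t, then the positive word a·t can be
    rewritten to begin with s. *)
Lemma absorb a t s : T a -> T t -> S s -> le a s -> le (inv a * s) t ->
  exists l, Forall T l /\ W [(true, a); (true, t)] (pword (s :: l)).
Proof.
  intros Ta Tt Ss Has Hrt.
  set (r := inv a * s) in *. set (q := inv r * t) in *.
  assert (Es : a * r = s) by apply mulKr.
  assert (Et : r * q = t) by apply mulKr.
  assert (Sr : S r).
  { apply (simple_split a r); [apply T_P; assumption | exact Has | rewrite Es; exact Ss]. }
  assert (Sq : S q).
  { apply (simple_split r q); [apply S_P, Sr | exact Hrt | rewrite Et; apply Tt]. }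
  destruct (classic (r = e)) as [Hr | Hr].
  { exists [t]. split; [apply Forall_cons; [exact Tt | apply Forall_nil]|].
    rewrite <- Es, Hr, mulr1. apply weq_refl. }
  assert (Wars : W [(true, a); (true, r)] [(true, s)])
    by (apply simple_relation; [| split | |]; assumption).
  destruct (classic (q = e)) as [Hq | Hq].
  { exists []. split; [constructor|].
    rewrite <- Et, Hq, mulr1. exact Wars. }
  exists [q]. split; [apply Forall_cons; [split; assumption | apply Forall_nil]|].
  apply weq_trans with [(true, a); (true, r); (true, q)].
  - apply weq_cons, weq_sym. apply (simple_relation r q t); [split | split | |]; try assumption.
    apply Tt.
  - apply (weq_app_r [(true, q)] _ _ Wars).
Qed.

Lemma greedy_head l : forall a s, Forall T (a :: l) -> is_glb le (gprod (a :: l)) D s ->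
  T s /\ exists l', Forall T l' /\ W (pword (a :: l)) (pword (s :: l')).
Proof.
  induction l as [|b l IH]; intros a s Hal [Hsx [HsD Hsg]].
  - inversion Hal as [|? ? Ta _]; subst. simpl in *. rewrite mulr1 in *.
    assert (Ea : a = s) by (apply le_antisym; [apply Hsg; [apply le_refl | apply Ta] | exact Hsx]).
    subst s. split; [exact Ta|]. exists []. split; [constructor | apply weq_refl].
  - inversion Hal as [|? ? Ta Tbl]; subst.
    set (y := gprod (b :: l)) in *. change (gprod (a :: b :: l)) with (a * y) in *.
    destruct (glb_exists y D) as [t [Hty [HtD Htg]]].
    destruct (IH b t Tbl (conj Hty (conj HtD Htg))) as [Tt [l2 [Hl2 Wbt]]].
    assert (Has : le a s) by (apply Hsg; [apply le_mul_r, gprod_P, Tbl | apply Ta]).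
    assert (Es : a * (inv a * s) = s) by apply mulKr.
    assert (Ss : S s).
    { split; [|exact HsD]. unfold leL. rewrite inv1, gmul1l, <- Es.
      apply P_mul; [apply T_P, Ta | exact Has]. }
    assert (Hrt : le (inv a * s) t).
    { apply Htg.
      - apply (le_cancel_l a). rewrite Es. exact Hsx.
      - apply (simple_split a); [apply T_P, Ta | exact Has | rewrite Es; exact Ss]. }
    split.
    { split; [exact Ss|]. rewrite <- Es.
      apply P_mul_ne_e; [apply T_P, Ta | exact Has | apply Ta]. }
    destruct (absorb a t s Ta Tt Ss Has Hrt) as [l1 [Hl1 Wat]].
    exists (l1 ++ l2). split; [apply Forall_app; split; assumption|].
    replace (pword (s :: l1 ++ l2)) with (pword (s :: l1) ++ pword l2)
      by (unfold pword; simpl; rewrite map_app; reflexivity).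
    apply weq_trans with ([(true, a); (true, t)] ++ pword l2).
    + apply (weq_cons _ _ _ Wbt).
    + apply weq_app_r, Wat.
Qed.

Lemma positive_words_equiv_bounded n : forall u v, Forall T u -> Forall T v ->
  gprod u = gprod v ->
  (forall l, Forall T l -> gprod l = gprod u -> length l <= n) ->
  W (pword u) (pword v).
Proof.
  induction n as [|n IH]; intros u v Hu Hv E Hbound;
    (destruct u as [|a u]; [rewrite (gprod_e v Hv (eq_sym E)); apply weq_refl|]);
    (destruct v as [|b v]; [discriminate (gprod_e _ Hu E)|]).
  - specialize (Hbound _ Hu eq_refl). simpl in Hbound. lia.
  - destruct (glb_exists (gprod (a :: u)) D) as [s Hs].
    destruct (greedy_head u a s Hu Hs) as [Ts [u' [Hu' Wu]]].
    rewrite E in Hs.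
    destruct (greedy_head v b s Hv Hs) as [_ [v' [Hv' Wv]]].
    assert (Eu : gprod (a :: u) = s * gprod u')
      by (rewrite <- (eval_pword (a :: u)), (eval_W _ _ Wu), eval_pword; reflexivity).
    assert (Ev : gprod (b :: v) = s * gprod v')
      by (rewrite <- (eval_pword (b :: v)), (eval_W _ _ Wv), eval_pword; reflexivity).
    eapply weq_trans; [exact Wu|]. eapply weq_trans; [|apply weq_sym; exact Wv].
    apply weq_cons, IH; [assumption | assumption | |].
    + apply (mulcanl s). rewrite <- Eu, <- Ev. exact E.
    + intros l Hl El.
      assert (Esl : gprod (s :: l) = gprod (a :: u)) by (simpl; rewrite El; symmetry; exact Eu).
      pose proof (Hbound (s :: l) (Forall_cons _ Ts Hl) Esl) as Hsl. simpl in Hsl. lia.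
Qed.

Lemma positive_words_equiv u v : Forall T u -> Forall T v -> gprod u = gprod v ->
  W (pword u) (pword v).
Proof.
  intros Hu Hv E. destruct (classic (gprod u = e)) as [He | Hne].
  - rewrite (gprod_e u Hu He), (gprod_e v Hv (eq_trans (eq_sym E) He)). apply weq_refl.
  - destruct (P_finite_length (gprod u) (gprod_P u Hu) Hne) as [N HN].
    apply (positive_words_equiv_bounded N); [assumption | assumption | assumption |].
    intros l Hl El. apply HN; [|exact El].
    eapply Forall_impl; [|exact Hl]. intros a Ta. split; [apply T_P, Ta | apply Ta].
Qed.

Lemma Delta_inv_commute a : T a -> W [(true, a); (false, D)] [(false, D); (true, phi a)].
Proof.
  intro Ta. pose proof (T_Delta a Ta) as TD.
  destruct (classic (a = D)) as [-> | Ea].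
  - replace (phi D) with D by (unfold phi; rewrite <- gmulA, mulVr, mulr1; reflexivity).
    apply weq_trans with (@nil (bool * G));
      [apply (weq_pair (true, D)) | apply weq_sym, (weq_pair (false, D))]; exact TD.
  - set (d := D * inv a).
    assert (Td : T d) by (apply left_complement_T; assumption).
    assert (Eda : d * a = D) by (unfold d; rewrite <- gmulA, gmulVl, mulr1; reflexivity).
    assert (Epd : phi a * d = D)
      by (unfold phi, d; rewrite <- !gmulA, mulKl, mulVr, mulr1; reflexivity).
    destruct (simple_relation d a D Td Ta Eda S_Delta) as (_ & _ & W1).
    destruct (simple_relation (phi a) d D (T_phi a Ta) Td Epd S_Delta) as (_ & W2 & _).
    eapply weq_trans; [exact W1 | apply weq_sym; exact W2].
Qed.

Lemma Delta_inv_powers k : forall a v, T a ->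
  W ((true, a) :: repeat (false, D) k ++ v)
    (repeat (false, D) k ++ (true, Nat.iter k phi a) :: v).
Proof.
  induction k as [|k IH]; intros a v Ta; [apply weq_refl|]. simpl repeat.
  apply weq_trans with ((false, D) :: (true, phi a) :: repeat (false, D) k ++ v).
  - apply (weq_app_r _ [(true, a); (false, D)] [(false, D); (true, phi a)]).
    apply Delta_inv_commute, Ta.
  - apply weq_cons. rewrite Nat.iter_succ_r. apply IH, T_phi, Ta.
Qed.

Lemma inverse_letter a : T a -> a <> D -> W [(false, a)] [(true, inv a * D); (false, D)].
Proof.
  intros Ta Ea. apply weq_sym.
  apply (simple_relation a (inv a * D) D Ta (right_complement_T a Ta Ea) (mulKr a D) S_Delta).
Qed.

Lemma Delta_normal_form w : word_over T w ->
  exists k u, Forall T u /\ W w (repeat (false, D) k ++ pword u).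
Proof.
  induction w as [|[[|] a] w IH]; intro Hw.
  { exists 0, []. split; [constructor | apply weq_refl]. }
  all: inversion Hw as [|? ? Ta Hw']; subst; simpl in Ta.
  all: destruct (IH Hw') as [k [u [Hu Wu]]].
  - exists k, (Nat.iter k phi a :: u). split; [constructor; [apply T_phi_iter|]; assumption|].
    apply weq_trans with ((true, a) :: repeat (false, D) k ++ pword u); [apply weq_cons, Wu|].
    apply Delta_inv_powers, Ta.
  - destruct (classic (a = D)) as [-> | Ea].
    { exists (1 + k), u. split; [exact Hu | apply weq_cons, Wu]. }
    set (c := inv a * D).
    assert (Tc : T c) by (apply right_complement_T; assumption).
    exists (1 + k), (Nat.iter (1 + k) phi c :: u).
    split; [constructor; [apply T_phi_iter|]; assumption|].
    apply weq_trans with ((true, c) :: repeat (false, D) (1 + k) ++ pword u).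
    + apply (weq_app [(false, a)] [(true, c); (false, D)]); [apply inverse_letter|]; assumption.
    + apply Delta_inv_powers, Tc.
Qed.

Lemma presentation_complete w w' : word_over T w -> word_over T w' ->
  eval w = eval w' -> W w w'.
Proof.
  intros Hw Hw' E.
  destruct (classic (T D)) as [TD | nTD].
  2:{ (* Δ = e: there are no generators, so both words are empty. *)
      assert (Hnil : forall z : word G, word_over T z -> z = []).
      { intros z [|x z' Hx _]; [reflexivity|]. exfalso. apply nTD, (T_Delta _ Hx). }
      rewrite (Hnil w Hw), (Hnil w' Hw'). apply weq_refl. }
  set (z := w ++ winv w').
  assert (Hz : word_over T z) by (apply word_over_app, word_over_winv; assumption).
  destruct (Delta_normal_form z Hz) as [k [u [Hu Wz]]].
  set (r := repeat D k).
  assert (Hr : Forall T r) by (apply Forall_forall; intros x Hx%repeat_spec; subst; exact TD).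
  assert (Er : repeat (false, D) k = winv (pword r))
    by (unfold winv, pword, r; rewrite !map_repeat, rev_repeat; reflexivity).
  rewrite Er in Wz.
  assert (Eu : gprod u = gprod r).
  { pose proof (eval_W _ _ Wz) as Ez.
    unfold z in Ez. rewrite !eval_app, !eval_winv, E, mulVr, !eval_pword in Ez.
    rewrite <- (mulKr (gprod r) (gprod u)), <- Ez, mulr1. reflexivity. }
  assert (Wz0 : W z []).
  { eapply weq_trans; [exact Wz|]. eapply weq_trans.
    - apply weq_app_l, (positive_words_equiv u r Hu Hr Eu).
    - apply weq_cancel_l, word_over_pword, Hr. }
  rewrite <- (winv_invol w'). apply weq_solve; [apply word_over_winv|]; assumption.
Qed.

Lemma P_word x : P x -> exists l, Forall T l /\ gprod l = x.
Proof.
  intros [l [Hl ->]]%P_generated.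
  induction Hl as [|a l Sa Hl IH]; [exists []; split; [constructor | reflexivity]|].
  destruct IH as [l' [Hl' E]]. destruct (classic (a = e)) as [-> | Ea].
  - exists l'. split; [exact Hl'|]. simpl. rewrite gmul1l. exact E.
  - exists (a :: l'). split; [constructor; [split|]; assumption | simpl; rewrite E; reflexivity].
Qed.

(** [T] generates [G]: every g is x^{-1}y with x, y in [P] (take x = gcd(e, g)). *)
Lemma T_generates g : exists w, word_over T w /\ eval w = g.
Proof.
  destruct (glb_exists e g) as [c [Hce [Hcg _]]].
  unfold leL in Hce, Hcg. rewrite mulr1 in Hce.
  destruct (P_word _ Hce) as [l1 [Hl1 E1]].
  destruct (P_word _ Hcg) as [l2 [Hl2 E2]].
  exists (winv (pword l1) ++ pword l2). split.
  - apply word_over_app; [apply word_over_winv|]; apply word_over_pword; assumption.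
  - rewrite eval_app, eval_winv, !eval_pword, E1, E2, invK. apply mulKr.
Qed.

Lemma T_finite : finite_set S -> finite_set T.
Proof.
  intros [L HL].
  assert (Hdrop : forall L0 : list G, exists l, forall x, (In x L0 /\ x <> e) <-> In x l).
  { induction L0 as [|a L0 [l Hl]]; [exists []; simpl; tauto|].
    destruct (classic (a = e)) as [-> | Ea].
    - exists l. intro x. rewrite <- Hl. simpl. intuition congruence.
    - exists (a :: l). intro x. simpl. rewrite <- Hl. intuition congruence. }
  destruct (Hdrop L) as [l Hl]. exists l. intro x. rewrite <- Hl. unfold Tset. rewrite HL. tauto.
Qed.

Lemma T_no_inverse a : T a -> T (inv a) -> False.
Proof. intros [Sa Ha] [Si _]. apply Ha, P_antisym; apply S_P; assumption. Qed.

Lemma simple_relators_triangular w : simple_relators w <-> triangular_relators T w.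
Proof.
  split.
  - intros [s [t [Ts [Tt [Sst ->]]]]]. exists s, t, (s * t).
    refine (conj Ts (conj Tt (conj _ (conj _ eq_refl)))); [apply T_mul | apply mulVr];
      assumption.
  - intros [a [b [c [Ta [Tb [Tc [E ->]]]]]]].
    assert (Ec : a * b = c).
    { rewrite <- (mulr1 (a * b)), <- (gmulVl G c), gmulA, E, gmul1l. reflexivity. }
    subst c. exists a, b. refine (conj Ta (conj Tb (conj _ eq_refl))). apply Tc.
Qed.

(** No product of three generators is trivial: it would make c^{-1} positive. *)
Lemma T_no_trivial_triple a b c : T a -> T b -> T c -> a * b * c <> e.
Proof.
  intros Ta Tb Tc E. apply Tc, P_antisym; [apply T_P, Tc|].
  rewrite (inv_uniq _ _ E), invK. apply P_mul; apply T_P; assumption.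
Qed.

Lemma T_triple_subproducts a b c : T a -> T b -> T c -> T (a * b * c) ->
  T (a * b) /\ T (b * c).
Proof.
  intros Ta Tb Tc [Sabc _].
  pose proof (T_P a Ta) as Pa. pose proof (T_P b Tb) as Pb. pose proof (T_P c Tc) as Pc.
  split; apply T_mul; try assumption.
  - apply (simple_split (a * b) c); [apply P_mul | |]; assumption.
  - rewrite <- gmulA in Sabc. apply (simple_split a (b * c)); [| apply P_mul |]; assumption.
Qed.

End Garside.

Theorem mainTheorem8 (G : group) (P : G -> Prop) (Delta : G) :
  garside_finite_type P Delta ->
  let T := fun x : G => simples P Delta x /\ x <> gone G in
  restricted_triangular_presentation T
    (fun w : word G => exists s t : G, T s /\ T t /\
        simples P Delta (gmul G s t) /\
        w = [(true, s); (true, t); (false, gmul G s t)]).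
Proof.
  intros [HG HS] T.
  change (restricted_triangular_presentation (Tset P Delta) (simple_relators P Delta)).
  split; [apply T_finite, HS|].
  split; [apply (T_no_inverse P Delta HG)|].
  split; [apply (simple_relators_triangular P Delta HG)|].
  split; [split; [|split]|split].
  - apply (relators_hold P Delta HG).
  - apply (T_generates P Delta HG).
  - apply (presentation_complete P Delta HG).
  - apply (T_no_trivial_triple P Delta HG).
  - apply (T_triple_subproducts P Delta HG).
Qed.
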